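(* Let $U\in\mathbb{R}^{n\times d}$, $\mathbf{y}\in\mathbb{R}^n$, $\mathbf{x}_t\in\mathbb{R}^d$, $\lambda_t>0$, and \[ \mathbf{x}_{t+1}=\arg\min_{\mathbf{x}\in\mathbb{R}^d}\frac12\left\|\mathbf{x}-\big(\mathbf{x}_t-U^\top(U\mathbf{x}_t-\mathbf{y})\big)\right\|_2^2+\lambda_t\|\mathbf{x}\|_1 . \] Then for any $s$-sparse vector $\mathbf{x}\in\mathbb{R}^d$, \[ \|\mathbf{x}_{t+1}-\mathbf{x}\|_2^2\le\lambda_t\sqrt s\|\mathbf{x}_{t+1}-\mathbf{x}\|_2+\left|(\mathbf{x}_{t+1}-\mathbf{x})^\top\big(U^\top(U\mathbf{x}_t-\mathbf{y})-(\mathbf{x}_t-\mathbf{x})\big)\right| . \]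
   Context: A vector is $s$-sparse if it has at most $s$ nonzero entries. *)

From HB Require Import structures.
From mathcomp Require Import all_boot all_order all_algebra.
Set Implicit Arguments. Unset Strict Implicit. Unset Printing Implicit Defensive.
Import Order.TTheory GRing.Theory Num.Theory.
Local Open Scope ring_scope.

Definition norm2 (R : rcfType) (d : nat) (v : 'cV[R]_d) : R :=
  Num.sqrt (\sum_(i < d) v i ord0 ^+ 2).

Definition norm1 (R : rcfType) (d : nat) (v : 'cV[R]_d) : R :=
  \sum_(i < d) `|v i ord0|.

Definition dotv (R : rcfType) (d : nat) (u v : 'cV[R]_d) : R :=
  \sum_(i < d) u i ord0 * v i ord0.

Definition sparse (R : rcfType) (d : nat) (s : nat) (v : 'cV[R]_d) : bool :=
  (#|[set i : 'I_d | v i ord0 != 0%R]| <= s)%N.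

Definition prox_obj (R : rcfType) (d : nat) (z : 'cV[R]_d) (lam : R) (x : 'cV[R]_d) : R :=
  2^-1 * norm2 (x - z) ^+ 2 + lam * norm1 x.

(* The minimiser [a] of [x |-> 1/2 ||x - z||^2 + lam ||x||_1] satisfies the variational inequality
   [<a - b, a - z> <= lam (||b||_1 - ||a||_1)] for every [b]: compare the objective at [a] with its
   value at [a - t (a - b)], use convexity of [||.||_1] and let [t -> 0].  When [b] is [s]-sparse,
   [||b||_1 - ||a||_1] only sees the support of [b], so Cauchy-Schwarz bounds it by
   [sqrt s ||a - b||_2].  For [z = x_t - g], [<a - b, a - z>] splits as
   [||a - b||^2 + <a - b, g - (x_t - b)>], which gives the estimate. *)
From HB Require Import structures.
From mathcomp Require Import all_boot all_order all_algebra.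
From mathcomp Require Import ring lra.
Import Order.TTheory GRing.Theory Num.Theory.
Local Open Scope ring_scope.

Lemma ler_of_forall_lerDpM (R : realFieldType) (D c W : R) :
  (forall t, 0 < t <= 1 -> D <= c + t * W) -> D <= c.
Proof.
move=> H; apply/ler_addgt0Pr => e e0.
set t := Num.min 1 (e / (`|W| + 1)).
have W1 : 0 < `|W| + 1 by rewrite ltr_wpDl.
have t0 : 0 < t by rewrite lt_min ltr01 divr_gt0.
have tW : t * W <= e.
  apply: le_trans (ler_norm _) _; rewrite normrM (gtr0_norm t0).
  apply: (@le_trans _ _ (e / (`|W| + 1) * (`|W| + 1))); last by rewrite divfK ?gt_eqF.
  by rewrite ler_pM ?ge_min ?lexx ?orbT // ?ltW // ltrDl.
have /H Dle : 0 < t <= 1 by rewrite t0 ge_min lexx.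
by apply: le_trans Dle _; rewrite lerD2l.
Qed.

Lemma big_sqr_le_card_sum (R : realFieldType) (I : finType) (S : {set I}) (u : I -> R) :
  (\sum_(i in S) u i) ^+ 2 <= #|S|%:R * \sum_(i in S) u i ^+ 2.
Proof.
have AMGM i j : u i * u j <= 2^-1 * u i ^+ 2 + 2^-1 * u j ^+ 2.
  by have := sqr_ge0 (u i - u j); lra.
rewrite expr2 mulr_suml.
apply: (@le_trans _ _ (\sum_(i in S) \sum_(j in S) (2^-1 * u i ^+ 2 + 2^-1 * u j ^+ 2))).
  by apply: ler_sum => i _; rewrite mulr_sumr; apply: ler_sum => j _.
rewrite (eq_bigr _ (fun i _ => big_split _ _ _ _ _)) big_split /= exchange_big -big_split /=.
rewrite -big_split /= sumr_const [leRHS]mulr_natl (eq_bigr (fun i => u i ^+ 2)) // => i _.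
by field.
Qed.

Section VectorNorms.

Context {R : rcfType} {d : nat}.
Implicit Types (a b u v w z : 'cV[R]_d) (t : R).

Lemma norm2_sqr v : norm2 v ^+ 2 = \sum_i v i ord0 ^+ 2.
Proof. by rewrite sqr_sqrtr // sumr_ge0 // => i _; exact: sqr_ge0. Qed.

Lemma norm2_ge0 v : 0 <= norm2 v.
Proof. exact: sqrtr_ge0. Qed.

Lemma dotvv v : dotv v v = norm2 v ^+ 2.
Proof. by rewrite norm2_sqr; apply: eq_bigr => i _; rewrite expr2. Qed.

Lemma dotvDr u v w : dotv u (v + w) = dotv u v + dotv u w.
Proof. by rewrite /dotv -big_split; apply: eq_bigr => i _; rewrite mxE mulrDr. Qed.

Lemma norm2_sqr_segment a b z t :
  norm2 (a - t *: (a - b) - z) ^+ 2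
  = norm2 (a - z) ^+ 2 - t * (2 * dotv (a - b) (a - z)) + t ^+ 2 * norm2 (a - b) ^+ 2.
Proof.
rewrite !norm2_sqr /dotv !mulr_sumr -sumrB -big_split /=.
by apply: eq_bigr => i _; rewrite !mxE; ring.
Qed.

Lemma norm1_segment a b t : 0 <= t <= 1 ->
  norm1 (a - t *: (a - b)) <= (1 - t) * norm1 a + t * norm1 b.
Proof.
case/andP=> t0 t1; rewrite /norm1 !mulr_sumr -big_split /=; apply: ler_sum => i _.
have -> : (a - t *: (a - b)) i ord0 = (1 - t) * a i ord0 + t * b i ord0.
  by rewrite !mxE; ring.
apply: le_trans (ler_normD _ _) _.
by rewrite !normrM (ger0_norm t0) ger0_norm ?subr_ge0.
Qed.

Lemma prox_obj_segment z lam a b t : 0 <= lam -> 0 <= t <= 1 ->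
  prox_obj z lam (a - t *: (a - b))
  <= prox_obj z lam a
     - t * (dotv (a - b) (a - z) - lam * (norm1 b - norm1 a) - t / 2 * norm2 (a - b) ^+ 2).
Proof.
move=> lam0 t01; have := norm1_segment a b t t01.
rewrite /prox_obj norm2_sqr_segment => /(ler_wpM2l lam0); lra.
Qed.

Lemma prox_variational {z lam a} b : 0 <= lam ->
  (forall x, prox_obj z lam a <= prox_obj z lam x) ->
  dotv (a - b) (a - z) <= lam * (norm1 b - norm1 a).
Proof.
move=> lam0 amin; apply: ler_of_forall_lerDpM (norm2 (a - b) ^+ 2 / 2) _ => t /andP[t0 t1].
have t01 : 0 <= t <= 1 by rewrite ltW.
have := le_trans (amin _) (prox_obj_segment z lam a b t lam0 t01).
rewrite -subr_ge0 addrC addKr oppr_ge0 pmulr_rle0 //; lra.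
Qed.

Lemma norm1_sub_sparse {s} a {b} : sparse s b ->
  norm1 b - norm1 a <= Num.sqrt s%:R * norm2 (a - b).
Proof.
rewrite /sparse; set S := [set i | b i ord0 != 0] => hs.
set T := \sum_(i in S) `|(a - b) i ord0|.
have supp : norm1 b - norm1 a <= T.
  rewrite /norm1 -sumrB [T]big_mkcond /=; apply: ler_sum => i _.
  rewrite inE !mxE; case: eqP => [->|_] /=; first by rewrite normr0 sub0r oppr_le0.
  by rewrite distrC lerB_dist.
have cs : T ^+ 2 <= s%:R * norm2 (a - b) ^+ 2.
  apply: le_trans (@big_sqr_le_card_sum R _ S (fun i => `|(a - b) i ord0|)) _.
  apply: ler_pM; rewrite ?ler0n ?ler_nat //.
    by apply: sumr_ge0 => i _; exact: sqr_ge0.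
  rewrite norm2_sqr [leRHS](bigID [in S]) /=.
  under eq_bigr do rewrite real_normK ?num_real //.
  by rewrite lerDl sumr_ge0 // => i _; exact: sqr_ge0.
apply: le_trans supp _.
rewrite -ler_sqr ?nnegrE ?sumr_ge0 ?mulr_ge0 ?sqrtr_ge0 ?norm2_ge0 //.
by rewrite exprMn sqr_sqrtr ?ler0n.
Qed.

End VectorNorms.

Theorem lemma1 (R : rcfType) (n d s : nat) (U : 'M[R]_(n, d)) (y : 'cV[R]_n)
  (xt xt1 : 'cV[R]_d) (lam : R) (hlam : 0 < lam)
  (hmin : forall x : 'cV[R]_d,
     prox_obj (xt - U^T *m (U *m xt - y)) lam xt1
       <= prox_obj (xt - U^T *m (U *m xt - y)) lam x)
  (x : 'cV[R]_d) (hx : sparse s x) :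
  norm2 (xt1 - x) ^+ 2 <=
    lam * Num.sqrt (s%:R) * norm2 (xt1 - x)
    + `| dotv (xt1 - x) (U^T *m (U *m xt - y) - (xt - x)) |.
Proof.
move: hmin; set g := U^T *m (U *m xt - y) => hmin.
have opt := prox_variational x (ltW hlam) hmin.
have split_dot : xt1 - (xt - g) = (xt1 - x) + (g - (xt - x)).
  by apply/matrixP => i j; rewrite !mxE; ring.
rewrite split_dot dotvDr dotvv in opt.
have := norm1_sub_sparse xt1 hx; rewrite -(ler_pM2l hlam) => sp.
have := ler_norm (- dotv (xt1 - x) (g - (xt - x))); rewrite normrN -mulrA; lra.
Qed.
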